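(* Let $e,h\in\omega^\omega$ be nondecreasing and unbounded, and suppose $e(l)\le\min\{n\in\omega: l<h(2^n)\}$ for all $l\in\omega$. Then $\mathcal{N}^{e^*}\subseteq\mathcal{J}_h$.
   Context: $2^\omega$ carries the metric $d(x,y)=2^{-\min\{n:x(n)\neq y(n)\}}$ for $x\neq y$ and $d(x,x)=0$. A gauge function is a nondecreasing $f\colon[0,\infty)\to[0,\infty)$ with $f(0)=0$, $\lim_{x\to0}f(x)=0$; $\mathcal{H}^f(A)=\lim_{\delta\to0}\inf\{\sum_nf(\operatorname{diam}C_n):A\subseteq\bigcup_nC_n,\ \operatorname{diam}C_n\le\delta\}$ and $\mathcal{N}^f=\{A\subseteq2^\omega:\mathcal{H}^f(A)=0\}$. For nondecreasing unbounded $e\in\omega^\omega$, $e^*$ is the gauge function with $e^*(0)=0$, $e^*(2^{-k})=2^{-e(k)}$ for all $k\in\omega$, linear on each interval $[2^{-k-1},2^{-k}]$ (and constant on $[1,\infty)$). For $\sigma\in(2^{<\omega})^\omega$, $(\operatorname{ht}\sigma)(n)=|\sigma(n)|$ and $[\sigma]_\infty=\{x\in2^\omega:\exists^\infty n\ \sigma(n)\subseteq x\}$; for $g\in\omega^\omega$, $\mathcal{J}_g=\{A\subseteq2^\omega:\exists\sigma\in(2^{<\omega})^\omega\,(\operatorname{ht}\sigma=g\wedge A\subseteq[\sigma]_\infty)\}$. *)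

From HB Require Import structures.
From mathcomp Require Import all_boot all_order all_algebra.
From mathcomp Require Import all_classical all_reals all_analysis.
Set Implicit Arguments. Unset Strict Implicit. Unset Printing Implicit Defensive.
Import Order.TTheory GRing.Theory Num.Theory.
Local Open Scope classical_set_scope.
Local Open Scope ring_scope.

Definition cantor := nat -> bool.

Section Defs.
Variable R : realType.

Definition cdist (x y : cantor) : R :=
  match pselect (exists n, x n != y n) with
  | left H => (2 ^- (ex_minn H))%R
  | right _ => 0
  end.

Definition diam (C : set cantor) : R :=
  if pselect (C = set0) then 0 else sup [set cdist x y | x in C & y in C].

Definition hausdorff_pre (f : R -> R) (delta : R) (A : set cantor) : \bar R :=
  ereal_inf [set (\sum_(0 <= n <oo) (f (diam (C n)))%:E)%E
            | C in [set C : nat -> set cantor |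
                     A `<=` \bigcup_n C n /\ forall n, diam (C n) <= delta]].

Definition hausdorff (f : R -> R) (A : set cantor) : \bar R :=
  lim ((fun delta => hausdorff_pre f delta A) @ 0^'+).

Definition Nnull (f : R -> R) : set (set cantor) :=
  [set A | hausdorff f A = 0%E].

(* e^*: e^*(0)=0, e^*(2^-k) = 2^-(e k), linear on [2^{-k-1},2^{-k}],
   constant on [1,oo).  For 0 < x < 1, k is the least k with 2^{-k-1} < x,
   so that x ∈ (2^{-k-1}, 2^{-k}]. Values at x < 0 are irrelevant (set 0). *)
Definition estar (e : nat -> nat) (x : R) : R :=
  if x <= 0 then 0
  else if 1 <= x then 2 ^- (e 0%N)
  else match pselect (exists k : nat, (2 ^- k.+1 < x)%R) with
       | left H =>
         let k := ex_minn H in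
         2 ^- (e k.+1) +
           (x - 2 ^- k.+1) * (2 ^- (e k) - 2 ^- (e k.+1)) / (2 ^- k - 2 ^- k.+1)
       | right _ => 0
       end.
End Defs.

Definition prefix_of (s : seq bool) (x : cantor) : Prop :=
  forall i, (i < size s)%N -> nth false s i = x i.

Definition inf_often_set (sigma : nat -> seq bool) : set cantor :=
  [set x | forall m, exists n, (m <= n)%N /\ prefix_of (sigma n) x].

Definition Jset (g : nat -> nat) : set (set cantor) :=
  [set A | exists sigma : nat -> seq bool,
      (forall n, size (sigma n) = g n) /\ A `<=` inf_often_set sigma].

From mathcomp Require Import all_boot all_order all_algebra.
From mathcomp Require Import all_classical all_reals all_analysis.
From mathcomp Require Import zify ring.
Set Implicit Arguments. Unset Strict Implicit. Unset Printing Implicit Defensive.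
Import Order.TTheory GRing.Theory Num.Theory.
Local Open Scope classical_set_scope.
Local Open Scope ring_scope.

(* For every k cover A by sets C_{k,j} with
   sum_j e^*(diam C_{k,j}) <= 2^-(k+4); each C_{k,j} lies in a cylinder [c_{k,j}]
   of some length m_{k,j} with 2^-e(m_{k,j}) <= e^*(diam C_{k,j}) + 2^-(k+j+5),
   so the levels L_{k,j} = e(m_{k,j}) satisfy sum_j 2^-L_{k,j} <= 2^-(k+3).
   This Kraft inequality leaves room for pairwise distinct indices n_{k,j} > k
   with n_{k,j} <= 2^(L_{k,j}-1), and the hypothesis relating e and h then gives
   h(n_{k,j}) <= m_{k,j}. Taking sigma(n_{k,j}) to be the first h(n_{k,j}) bits
   of c_{k,j}, every x in A extends sigma(n_{k,j}) for some j, for every k. *)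

Definition cylinder (c : cantor) (m : nat) : set cantor :=
  [set x | forall i, (i < m)%N -> x i = c i].

Section PowersOfTwo.
Variable R : realType.

Lemma exp2N_gt0 n : 0 < (2:R) ^- n.
Proof. by rewrite invr_gt0 exprn_gt0. Qed.

Lemma ltr_exp2N m n : ((2:R) ^- n < 2 ^- m) = (m < n)%N.
Proof. by rewrite ltf_pV2 ?posrE ?exprn_gt0 // ltr_eXn2l // ltr1n. Qed.

Lemma ler_exp2N m n : ((2:R) ^- n <= 2 ^- m) = (m <= n)%N.
Proof. by rewrite lef_pV2 ?posrE ?exprn_gt0 // ler_eXn2l // ltr1n. Qed.

Lemma exp2N_halve n : (2:R) ^- n = 2 ^- n.+1 + 2 ^- n.+1.
Proof. by rewrite exprS invfM -mulrDl; field. Qed.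

Lemma sum_exp2N c N :
  \sum_(0 <= j < N) (2:R) ^- (c + j).+1 = 2 ^- c - 2 ^- (c + N).
Proof.
elim: N => [|N IH]; first by rewrite big_geq // addn0 subrr.
by rewrite big_nat_recr //= IH [X in _ - X](exp2N_halve (c + N)) -addnS opprD addrA subrK.
Qed.

End PowersOfTwo.

Section CantorMetric.
Variable R : realType.

Lemma cdist_cases (x y : cantor) :
  (cdist R x y = 0 /\ forall i, x i = y i) \/
  exists n, [/\ cdist R x y = 2 ^- n, x n <> y n & forall i, (i < n)%N -> x i = y i].
Proof.
rewrite /cdist; case: pselect => [H|H]; last first.
  by left; split => // i; apply/eqP; apply: contra_notT H => Hi; exists i.
right; case: ex_minnP => n /eqP Hn Hmin; exists n; split => // i lti.
by apply/eqP; apply: contraTT lti => /Hmin; rewrite -leqNgt.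
Qed.

(* The distances only take the values 0 and 2^-n, so a set with two distinct
   points has a largest distance 2^-m, its diameter. *)
Lemma subset_cylinder_diam (C : set cantor) (c : cantor) : C c ->
  (forall m, C `<=` cylinder c m) \/
  exists m, diam R C = 2 ^- m /\ C `<=` cylinder c m.
Proof.
move=> Cc.
have [Hex|Hno] := pselect (exists x, C x /\ exists i, x i <> c i); last first.
  left => m x Cx i _; apply: contra_notP Hno => H; exists x; split => //; by exists i.
right.
pose P m := `[< exists x y, [/\ C x, C y & cdist R x y = 2 ^- m] >].
have HP : exists m, P m.
  case: Hex => x [Cx [i Hi]].
  case: (cdist_cases x c) => [[_ H]|[n [Hn _ _]]]; first by case: Hi.
  by exists n; apply/asboolP; exists x, c; split.
case: (ex_minnP HP) => m /asboolP [a [b [Ca Cb Hab]]] Hmin.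
have ub : ubound [set cdist R x y | x in C & y in C] (2 ^- m).
  move=> _ [x Cx [y Cy <-]].
  case: (cdist_cases x y) => [[-> _]|[n [Hn _ _]]]; first exact/ltW/exp2N_gt0.
  by rewrite Hn ler_exp2N; apply: Hmin; apply/asboolP; exists x, y; split.
exists m; split.
  rewrite /diam; destruct (pselect (C = set0)) as [C0|nC0]; first by exfalso; move: Cc; rewrite C0.
  apply/eqP; rewrite eq_le; apply/andP; split.
    by apply: ge_sup => //; exists (cdist R a b), a => //; exists b.
  by apply: ub_le_sup; [exists (2 ^- m) | exists a => //; exists b].
move=> x Cx i lti.
case: (cdist_cases x c) => [[_ H]|[n [Hn _ Hlt]]]; first exact: H.
apply: Hlt; apply: leq_trans lti _.
by apply: Hmin; apply/asboolP; exists x, c; split.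
Qed.

End CantorMetric.

Section Gauge.
Variables (R : realType) (e : nat -> nat).
Hypothesis e_mono : {homo e : m n / (m <= n)%N}.
Hypothesis e_unbounded : forall N, exists n, (N <= e n)%N.

Lemma estar_ge0 (x : R) : 0 <= estar e x.
Proof.
rewrite /estar; case: ifP => // _; case: ifP => _; first exact/ltW/exp2N_gt0.
case: pselect => // H; case: ex_minnP => k Hk _.
apply: addr_ge0; first exact/ltW/exp2N_gt0.
apply: divr_ge0; last by rewrite subr_ge0 ler_exp2N.
by apply: mulr_ge0; rewrite subr_ge0 ?ler_exp2N ?e_mono // ltW.
Qed.

Lemma estar_exp2N m : estar e (2 ^- m : R) = 2 ^- (e m).
Proof.
rewrite /estar ifF; last by apply/negbTE; rewrite -ltNge exp2N_gt0.
case: m => [|m]; first by rewrite expr0 invr1 lexx.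
rewrite ifF; last first.
  by apply/negbTE; rewrite -ltNge -[X in _ < X]invr1 -(expr0 (2:R)) ltr_exp2N.
case: pselect => [H|[]]; last by exists m.+1; rewrite ltr_exp2N.
case: ex_minnP => k; rewrite ltr_exp2N ltnS => mk Hmin.
have -> : k = m.+1.
  by apply/eqP; rewrite eqn_leq mk Hmin // ltr_exp2N.
rewrite [_ * _ / _]mulrAC mulfV ?mul1r; first by rewrite addrC subrK.
by rewrite subr_eq0 gt_eqF // ltr_exp2N.
Qed.

Lemma cylinder_estar_approx (C : set cantor) (t : nat) :
  exists m c, C `<=` cylinder c m /\
    (2:R) ^- (e m) <= estar e (diam R C) + 2 ^- t.
Proof.
have [n tn] := e_unbounded t.
have small : (2:R) ^- (e n) <= estar e (diam R C) + 2 ^- t.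
  by rewrite -[X in X <= _]add0r lerD ?estar_ge0 ?ler_exp2N.
have [[c Cc]|nC] := pselect (exists c, C c); last first.
  by exists n, (fun=> false); split => // x Cx; case: nC; exists x.
case: (subset_cylinder_diam R Cc) => [Hall|[m [-> Cm]]].
  by exists n, c; split => //; apply: Hall.
exists m, c; split => //.
by rewrite estar_exp2N lerDl ltW // exp2N_gt0.
Qed.

End Gauge.

Section HausdorffNull.
Variable R : realType.

Lemma hausdorff_pre_nonincr (f : R -> R) (A : set cantor) :
  {homo (fun d => hausdorff_pre f d A) : n m / n <= m >-> (m <= n)%E}.
Proof.
move=> d1 d2 d12; apply: le_ereal_inf_tmp => _ [C [HA Hd] <-].
by apply: ereal_inf_lbound; exists C => //; split => // n; apply: le_trans (Hd n) d12.
Qed.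

Lemma hausdorff_pre1_le (f : R -> R) (A : set cantor) :
  (hausdorff_pre f 1 A <= hausdorff f A)%E.
Proof.
have := @nonincreasing_at_right_cvge R (fun d => hausdorff_pre f d A) 0 (BRight 1).
move=> /(_ _ _) H; rewrite /hausdorff (cvg_lim _ (H _ _)) //; last first.
- by move=> x y _ _; apply: hausdorff_pre_nonincr.
- by rewrite bnd_simp.
by apply: ereal_sup_ubound; exists 1 => //=; rewrite in_itv /= ltr01 lexx.
Qed.

Lemma Nnull_small_cover (f : R -> R) (A : set cantor) (eps : R) :
  (forall x, 0 <= f x) -> Nnull f A -> 0 < eps ->
  exists C : nat -> set cantor, A `<=` \bigcup_n C n /\
    forall N, \sum_(0 <= j < N) f (diam R (C j)) <= eps.
Proof.
move=> f0 HA eps0.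
have : (hausdorff_pre f 1 A < eps%:E)%E.
  by apply: le_lt_trans (hausdorff_pre1_le f A) _; rewrite HA lte_fin.
move=> /ereal_inf_lt [_ [C [AC _] <-]] Hlt; exists C; split => // N.
rewrite -lee_fin -sumEFin; apply: le_trans (ltW Hlt).
by apply: nneseries_lim_ge => n _ _; rewrite lee_fin.
Qed.

Lemma Nnull_estar_cylinder_cover (e : nat -> nat) (A : set cantor) (K : nat) :
  {homo e : m n / (m <= n)%N} -> (forall N, exists n, (N <= e n)%N) ->
  Nnull (@estar R e) A ->
  exists cyl : nat -> nat * cantor,
    A `<=` \bigcup_j cylinder (cyl j).2 (cyl j).1 /\
    forall N, \sum_(0 <= j < N) (2:R) ^- (e (cyl j).1) <= 2 ^- K.
Proof.
move=> e_mono e_unb HA.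
have [C [AC HC]] := Nnull_small_cover (estar_ge0 e_mono) HA (exp2N_gt0 R K.+1).
have approx j : exists mc : nat * cantor,
    C j `<=` cylinder mc.2 mc.1 /\
    (2:R) ^- (e mc.1) <= estar e (diam R (C j)) + 2 ^- (K.+1 + j).+1.
  by have [m [c ?]] := cylinder_estar_approx R e_mono e_unb (C j) (K.+1 + j).+1; exists (m, c).
have [cyl Hcyl] := choice approx; exists cyl; split.
  by move=> x /AC [j _ Cjx]; exists j => //; apply: (Hcyl j).1.
move=> N; apply: le_trans (_ : \sum_(0 <= j < N)
  (estar e (diam R (C j)) + 2 ^- (K.+1 + j).+1) <= _).
  by apply: ler_sum => j _; apply: (Hcyl j).2.
rewrite big_split sum_exp2N (exp2N_halve R K) lerD // lerBlDr lerDl.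
exact/ltW/exp2N_gt0.
Qed.

End HausdorffNull.

Definition level_rank (L : nat -> nat) j := (\sum_(0 <= i < j) (L i == L j))%N.

Lemma level_rank_lt L j j' :
  (j < j')%N -> L j = L j' -> (level_rank L j < level_rank L j')%N.
Proof.
move=> jj' Lj; rewrite /level_rank -Lj.
rewrite [X in (_ < X)%N](@big_cat_nat _ _ _ j.+1) //= big_nat_recr //= eqxx; lia.
Qed.

Lemma level_rank_inj L j j' :
  L j = L j' -> level_rank L j = level_rank L j' -> j = j'.
Proof.
move=> Ljj' rjj'; case: (ltngtP j j') => // jj'.
- by have := level_rank_lt jj' Ljj'; rewrite rjj' ltnn.
- by have := level_rank_lt jj' (esym Ljj'); rewrite rjj' ltnn.
Qed.

(* The first j+1 terms contain level_rank L j + 1 copies of 2^-(L j). *)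
Lemma level_rank_bound (R : realType) (L : nat -> nat) (K : nat) :
  (forall N, \sum_(0 <= j < N) (2:R) ^- (L j) <= 2 ^- K) ->
  forall j, ((level_rank L j).+1 * 2 ^ K <= 2 ^ (L j))%N.
Proof.
move=> HS j.
have H1 : (level_rank L j).+1%:R * 2 ^- (L j) <= (2:R) ^- K.
  apply: le_trans (HS j.+1).
  rewrite /level_rank -addn1 natrD natr_sum mulrDl mulr_suml big_nat_recr //=.
  rewrite mul1r lerD2r; apply: ler_sum => i _.
  by case: eqP => [->|_]; rewrite ?mul1r // mul0r ltW // exp2N_gt0.
rewrite -(ler_nat R) natrM !natrX.
have p2K : (0:R) < 2 ^+ K by rewrite exprn_gt0.
have p2L : (0:R) < 2 ^+ L j by rewrite exprn_gt0.
move: H1; rewrite -(ler_pM2r p2K) -(ler_pM2r p2L).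
by rewrite mulrAC divfK ?gt_eqF // mulVf ?gt_eqF // mul1r.
Qed.

Lemma pow2_mul_odd_inj a b x y :
  (2 ^ a * (2 * x).+1 = 2 ^ b * (2 * y).+1)%N -> a = b /\ x = y.
Proof.
wlog ab : a b x y / (a <= b)%N.
  move=> W H; case: (leqP a b) => [ab|ba]; first exact: W.
  by case: (W b a y x (ltnW ba) (esym H)) => -> ->.
have [d ->] : exists d, b = (a + d)%N by exists (b - a)%N; lia.
rewrite expnD -mulnA => /eqP; rewrite eqn_pmul2l ?expn_gt0 // => /eqP.
case: d => [|d]; first by rewrite mul1n => H; split; lia.
by move=> /(congr1 odd); rewrite expnS -mulnA oddS !oddM.
Qed.

Lemma pow2_add_inj D D' r r' : (r < 2 ^ D)%N -> (r' < 2 ^ D')%N ->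
  (2 ^ D + r = 2 ^ D' + r')%N -> D = D' /\ r = r'.
Proof.
wlog DD : D D' r r' / (D <= D')%N.
  move=> W H1 H2 H; case: (leqP D D') => [ab|ba]; first exact: W.
  by case: (W D' D r' r (ltnW ba) H2 H1 (esym H)) => -> ->.
move=> H1 H2 H; case: (ltngtP D D') => [lt|gt|eq]; last by subst; split => //; lia.
- have : (2 ^ D.+1 <= 2 ^ D')%N by rewrite leq_exp2l.
  rewrite expnS; lia.
- lia.
Qed.

Definition dyadic_code (k D r : nat) := (2 ^ k * (2 * (2 ^ D + r)).+1)%N.

Lemma dyadic_code_inj k D r k' D' r' : (r < 2 ^ D)%N -> (r' < 2 ^ D')%N ->
  dyadic_code k D r = dyadic_code k' D' r' -> [/\ k = k', D = D' & r = r'].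
Proof.
by move=> rD rD' /pow2_mul_odd_inj [-> /pow2_add_inj] [] // -> ->.
Qed.

Lemma dyadic_code_bounds k D r : (r < 2 ^ D)%N ->
  (k < dyadic_code k D r)%N /\ (2 * dyadic_code k D r < 2 ^ (k + D).+3)%N.
Proof.
move=> rD; rewrite /dyadic_code; split.
  by apply: leq_trans (ltn_expl k (ltnSn 1)) _; rewrite leq_pmulr.
rewrite !expnS expnD; have := expn_gt0 2 k; nia.
Qed.

(* Encode (k, j) by k, the excess L k j - (k+3) and the level rank of j. *)
Lemma sparse_slots (R : realType) (L : nat -> nat -> nat) :
  (forall k N, \sum_(0 <= j < N) (2:R) ^- (L k j) <= 2 ^- k.+3) ->
  exists slot : nat -> nat -> nat,
    (forall k j k' j', slot k j = slot k' j' -> k = k' /\ j = j') /\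
    (forall k j, (k < slot k j)%N /\ (2 * slot k j <= 2 ^ L k j)%N).
Proof.
move=> HS.
have rank_bound k j := level_rank_bound (HS k) j.
have L_ge k j : (k.+3 <= L k j)%N.
  rewrite -(leq_exp2l _ _ (ltnSn 1)); apply: leq_trans (rank_bound k j).
  by rewrite leq_pmull.
have rank_lt k j : (level_rank (L k) j < 2 ^ (L k j - k.+3))%N.
  have := rank_bound k j.
  by rewrite -[X in (_ <= 2 ^ X)%N](subnK (L_ge k j)) expnD leq_pmul2r ?expn_gt0.
exists (fun k j => dyadic_code k (L k j - k.+3) (level_rank (L k) j)); split.
  move=> k j k' j' /dyadic_code_inj [] // <- D_eq rank_eq; split => //.
  apply: level_rank_inj rank_eq.
  by have := L_ge k j; have := L_ge k j'; lia.
move=> k j; have [k_lt] := dyadic_code_bounds k (rank_lt k j).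
have -> : (k + (L k j - k.+3)).+3 = L k j by have := L_ge k j; lia.
by move=> /ltnW code_le; split.
Qed.

Lemma h_le_of_exp2_e (e h : nat -> nat) :
  {homo h : m n / (m <= n)%N} ->
  (forall l n : nat, (l < h (2 ^ n))%N -> (e l <= n)%N) ->
  forall s l, (0 < s)%N -> (2 * s <= 2 ^ e l)%N -> (h s <= l)%N.
Proof.
move=> h_mono e_h s l s_gt0 s_le; rewrite leqNgt; apply/negP => l_lt.
move: s_le; case E: (e l) => [|n]; first by lia.
rewrite expnS leq_pmul2l // => s_le.
have := e_h l n (leq_trans l_lt (h_mono _ _ s_le)).
by rewrite E ltnn.
Qed.

Lemma Jset_of_slotted_covers (h : nat -> nat) (A : set cantor)
    (len slot : nat -> nat -> nat) (pt : nat -> nat -> cantor) :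
  (forall k, A `<=` \bigcup_j cylinder (pt k j) (len k j)) ->
  (forall k j k' j', slot k j = slot k' j' -> k = k' /\ j = j') ->
  (forall k j, (k <= slot k j)%N /\ (h (slot k j) <= len k j)%N) ->
  Jset h A.
Proof.
move=> cover slot_inj slot_ok.
pose sigma n := match pselect (exists kj : nat * nat, slot kj.1 kj.2 = n) with
  | left H => let kj := proj1_sig (cid H) in mkseq (pt kj.1 kj.2) (h n)
  | right _ => nseq (h n) false end.
exists sigma; split.
  move=> n; rewrite /sigma.
  by case: pselect => ?; rewrite ?size_mkseq ?size_nseq.
move=> x Ax k; have [j _ xj] := cover k x Ax.
exists (slot k j); split; first exact: (slot_ok k j).1.
rewrite /sigma; case: pselect => [H|[]]; last by exists (k, j).
case: (cid H) => [[k' j'] /= /slot_inj [-> ->]] i.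
rewrite size_mkseq => hi; rewrite nth_mkseq //; symmetry; apply: xj.
exact: leq_trans hi (slot_ok k j).2.
Qed.

Theorem lemma3p3 (R : realType) (e h : nat -> nat) :
  {homo e : m n / (m <= n)%N} -> (forall N, exists n, (N <= e n)%N) ->
  {homo h : m n / (m <= n)%N} -> (forall N, exists n, (N <= h n)%N) ->
  (forall l n : nat, (l < h (2 ^ n))%N -> (e l <= n)%N) ->
  @Nnull R (@estar R e) `<=` Jset h.
Proof.
move=> e_mono e_unb h_mono _ e_h A HA.
have [cyl Hcyl] := choice (fun k => Nnull_estar_cylinder_cover k.+3 e_mono e_unb HA).
have [slot [slot_inj slot_bnd]] :=
  sparse_slots (L := fun k j => e (cyl k j).1) (fun k => (Hcyl k).2).
apply: (Jset_of_slotted_covers (fun k => (Hcyl k).1) slot_inj) => k j.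
have [k_lt slot_le] := slot_bnd k j; split; first exact: ltnW.
exact: h_le_of_exp2_e h_mono e_h _ _ (leq_ltn_trans (leq0n k) k_lt) slot_le.
Qed.
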